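(* Let $\Omega$ be a finite search space, let $\mathcal{B}$ be a finite nonempty set of information resources, and let $t\subseteq\Omega$ be a fixed target set of size $k$ with indicator vector $\mathbf{t}\in\{0,1\}^{|\Omega|}$. Fix an algorithm $\mathcal{A}$ and let $\phi(t,f)$ be a decomposable probability-of-success metric for $\mathcal{A}$ on the search problem $(\Omega,t,f)$. For $q_{\min}\in(0,1]$ define $\mathcal{B}_{q_{\min}}=\{f\mid f\in\mathcal{B},\ \phi(t,f)\ge q_{\min}\}$. Then $$\frac{|\mathcal{B}_{q_{\min}}|}{|\mathcal{B}|}\le\frac{p+\mathrm{Bias}(\mathcal{B},\mathbf{t})}{q_{\min}},\qquad p=\frac{k}{|\Omega|}.$$
   Context: A probability-of-success metric $\phi$ assigns to each target set $t\subseteq\Omega$ and information resource $f$ a success probability $\phi(t,f)$. It is decomposable if for each $f$ there exists a probability vector $\mathbf{P}_{\phi,f}\in\mathbb{R}^{|\Omega|}$ (nonnegative entries summing to $1$), not a function of $t$, such that $\phi(t,f)=\mathbf{t}^\top\mathbf{P}_{\phi,f}$ for all $t$. For a distribution $\mathcal{D}$ over information resources with $F\sim\mathcal{D}$ and a $k$-hot target vector $\mathbf{t}$, $\mathrm{Bias}(\mathcal{D},\mathbf{t})=\mathbb{E}_{\mathcal{D}}[\mathbf{t}^\top\mathbf{P}_{\phi,F}]-\frac{k}{|\Omega|}$; $\mathrm{Bias}(\mathcal{B},\mathbf{t})$ denotes this quantity for $\mathcal{D}$ the uniform distribution on $\mathcal{B}$. *)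

From mathcomp Require Import all_boot all_order all_algebra.
Set Implicit Arguments. Unset Strict Implicit. Unset Printing Implicit Defensive.
Import Order.TTheory GRing.Theory Num.Theory.
Local Open Scope ring_scope.

Definition prob_vec (R : numDomainType) (Omega : finType) (P : {ffun Omega -> R}) : Prop :=
  (forall x, 0 <= P x) /\ \sum_(x : Omega) P x = 1.

(* t^T P, for t the indicator vector of the target set t. *)
Definition tdot (R : numDomainType) (Omega : finType) (t : {set Omega}) (P : {ffun Omega -> R}) : R :=
  \sum_(x in t) P x.

Definition decomposable_with (R : numDomainType) (Omega Inf : finType)
  (phi : {set Omega} -> Inf -> R) (P : Inf -> {ffun Omega -> R}) : Prop :=
  (forall f, prob_vec (P f)) /\ (forall t f, phi t f = tdot t (P f)).

(* Bias(B, t) for D the uniform distribution on B: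
   E_D[t^T P_{phi,F}] - |t| / |Omega|. *)
Definition Bias (R : numFieldType) (Omega Inf : finType) (P : Inf -> {ffun Omega -> R})
  (B : {set Inf}) (t : {set Omega}) : R :=
  (\sum_(f in B) tdot t (P f)) / #|B|%:R - #|t|%:R / #|Omega|%:R.

From mathcomp Require Import all_boot all_order all_algebra.
Import Order.TTheory GRing.Theory Num.Theory.
Local Open Scope ring_scope.

(* p + Bias(B, t) is exactly the average of phi(t, f) = t^T P_{phi,f} >= 0
   over f in B, so the bound is Markov's inequality for the uniform
   distribution on B. *)

Lemma mulr_card_ge_le_sum (R : numDomainType) (I : finType) (B : {set I})
    (g : I -> R) (q : R) :
  (forall f, f \in B -> 0 <= g f) ->
  q * #|[set f in B | q <= g f]|%:R <= \sum_(f in B) g f.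
Proof.
move=> g_ge0; rewrite -sum1_card natr_sum mulr_sumr big_set /=.
rewrite [leRHS](bigID (fun f => q <= g f)) /= -[leLHS]addr0.
apply: lerD; last by apply: sumr_ge0 => f /andP[/g_ge0].
by apply: ler_sum => f /andP[_]; rewrite mulr1.
Qed.

Lemma tdot_ge0 (R : numDomainType) (Omega : finType) (t : {set Omega})
    (P : {ffun Omega -> R}) :
  prob_vec P -> 0 <= tdot t P.
Proof. by case=> P_ge0 _; apply: sumr_ge0 => x _. Qed.

Lemma addr_Bias (R : numFieldType) (Omega Inf : finType)
    (P : Inf -> {ffun Omega -> R}) (B : {set Inf}) (t : {set Omega}) :
  #|t|%:R / #|Omega|%:R + Bias P B t = (\sum_(f in B) tdot t (P f)) / #|B|%:R.
Proof. by rewrite /Bias addrC subrK. Qed.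

Theorem theorem6 (R : realFieldType) (Omega Inf : finType)
  (B : {set Inf}) (t : {set Omega}) (k : nat)
  (phi : {set Omega} -> Inf -> R) (P : Inf -> {ffun Omega -> R})
  (qmin : R) :
  B != set0 ->
  #|t| = k ->
  decomposable_with phi P ->
  0 < qmin -> qmin <= 1 ->
  #|[set f in B | qmin <= phi t f]|%:R / #|B|%:R
    <= (k%:R / #|Omega|%:R + Bias P B t) / qmin.
Proof.
move=> B_neq0 <- [P_prob phiE] qmin_gt0 _.
have B_gt0 : (0 : R) < #|B|%:R by rewrite ltr0n card_gt0.
rewrite addr_Bias ler_pdivlMr // mulrAC ler_pM2r ?invr_gt0 // mulrC.
under eq_finset => f do rewrite phiE.
by apply: mulr_card_ge_le_sum => f _; apply: tdot_ge0.
Qed.
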